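(* Let $l,m\in\mathbb{N}$ and let $q(x)=x^6-(l+m+3)x^4+(lm+l+m+3)x^2-1$. If $q(x)$ is reducible over $\mathbb{Q}$, then the set of all positive eigenvalues of the adjacency matrix of the double subdivided star $T_{l,m}$, with any one of them removed, is linearly independent over $\mathbb{Q}$.
   Context: A subdivided star $SK_{1,l}$ is obtained by identifying exactly one pendant (end) vertex from each of $l$ copies of the path $P_3$ on three vertices; the identified vertex is the coalescence vertex. The double subdivided star $T_{l,m}$ is obtained from $SK_{1,l}$ and $SK_{1,m}$ by adding one edge joining their two coalescence vertices. Eigenvalues are those of the adjacency matrix; the characteristic polynomial of $T_{l,m}$ is $(x^2-1)^{l+m-2}q(x)$. *)

From HB Require Import structures.
From mathcomp Require Import all_boot all_order all_algebra all_field.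
Set Implicit Arguments. Unset Strict Implicit. Unset Printing Implicit Defensive.
Import Order.TTheory GRing.Theory Num.Theory.
Local Open Scope ring_scope.

(* Double subdivided star T_{l,m} on n = 2l+2m+2 vertices, numbered:
   0 = coalescence vertex c1 of SK_{1,l},  1 = coalescence vertex c2 of SK_{1,m},
   2+i       (i < l) : middle vertex of the i-th P3 of SK_{1,l},
   2+l+i     (i < l) : end vertex of the i-th P3 of SK_{1,l},
   2+2l+j    (j < m) : middle vertex of the j-th P3 of SK_{1,m},
   2+2l+m+j  (j < m) : end vertex of the j-th P3 of SK_{1,m}. *)
Definition Tnum (l m : nat) : nat := (2 * (l + m)).+2.

Definition Tarc (l m : nat) (i j : nat) : bool :=
  [|| (i == 0%N) && (j == 1%N),
      (i == 0%N) && (2 <= j < 2 + l)%N,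
      (2 <= i < 2 + l)%N && (j == i + l)%N,
      (i == 1%N) && (2 + 2 * l <= j < 2 + 2 * l + m)%N
    | (2 + 2 * l <= i < 2 + 2 * l + m)%N && (j == i + m)%N].

Definition Tedge (l m : nat) (i j : nat) : bool := Tarc l m i j || Tarc l m j i.

Definition adjT (l m : nat) : 'M[algC]_(Tnum l m) :=
  \matrix_(i, j) (Tedge l m i j)%:R.

Definition q_Tlm (l m : nat) : {poly rat} :=
  'X^6 - ((l + m + 3)%:R)%:P * 'X^4
       + ((l * m + l + m + 3)%:R)%:P * 'X^2 - 1.

Definition Qlin_indep (P : pred algC) : Prop :=
  forall (s : seq algC) (c : algC -> rat),
    uniq s -> all P s ->
    \sum_(x <- s) ratr (c x) * x = 0 ->
    all (fun x => c x == 0) s.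

From HB Require Import structures.
From mathcomp Require Import all_boot all_order all_algebra all_field.
From mathcomp Require Import zify ring lra.
From Stdlib Require Import Classical.
Set Implicit Arguments.
Unset Strict Implicit.
Unset Printing Implicit Defensive.

Import Order.TTheory GRing.Theory Num.Theory.
Local Open Scope ring_scope.

(* If x^2 <> 1, an eigenvector for x is determined by its values a, b at the two centres
   (on each pendant path, (x^2 - 1) (middle value) = x (centre value)), and the equations at
   the centres eliminate to p(x^2) a = 0 with a <> 0, where q(x) = p(x^2). So each positive
   eigenvalue is 1 or a square root of a root y_i of the cubic p, which is irreducible.
   If q is reducible, a proper factor of q shows that sqrt(y) lies in Q(y), so r_i := W(y_i)
   are square roots of the y_i for a single W in Q[X]. Their elementary symmetric functions
   are rational: the r_i are the roots of an irreducible rational cubic g, and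
   r_1 + r_2 + r_3 <> 0 as (l+m+3)^2 <> 4(lm+l+m+3). A relation r_2 = a r_1 + b would make
   z |-> a z + b a symmetry of g, which is impossible, so any three of 1, r_1, r_2, r_3 are
   independent over Q. Removing mu removes one of these four, up to sign, from the positive
   eigenvalues. *)

(** * Eigenvectors of the double subdivided star *)

Ltac case_or := repeat match goal with |- is_true (_ || _) -> _ => case/orP end.
Ltac prove_and := repeat (apply/andP; split); lia.
Ltac prove_or := first [ apply/orP; left; prove_and | apply/orP; right; prove_or | prove_and ].
Ltac Tedge_lia := rewrite /Tedge /Tarc; apply/idP/idP; [case_or; lia | case_or => *; prove_or].

Section Neighbourhoods.
Variables (l m i : nat).

Lemma Tedge_hub1 k : Tedge l m k 0 = (k == 1)%N || (2 <= k < 2 + l)%N.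
Proof. by Tedge_lia. Qed.

Lemma Tedge_hub2 k : Tedge l m k 1 = (k == 0)%N || (2 + 2 * l <= k < 2 + 2 * l + m)%N.
Proof. by Tedge_lia. Qed.

Lemma Tedge_mid1 : (i < l)%N ->
  forall k, Tedge l m k (2 + i) = (k == 0)%N || (k == 2 + l + i)%N.
Proof. by move=> il k; Tedge_lia. Qed.

Lemma Tedge_mid2 : (i < m)%N ->
  forall k, Tedge l m k (2 + 2 * l + i) = (k == 1)%N || (k == 2 + 2 * l + m + i)%N.
Proof. by move=> im k; Tedge_lia. Qed.

Lemma Tedge_end1 : (i < l)%N ->
  forall k, Tedge l m k (2 + l + i) = (k == 2 + i)%N.
Proof. by move=> il k; Tedge_lia. Qed.

Lemma Tedge_end2 : (i < m)%N ->
  forall k, Tedge l m k (2 + 2 * l + m + i) = (k == 2 + 2 * l + i)%N.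
Proof. by move=> im k; Tedge_lia. Qed.

End Neighbourhoods.

Section OrdinalSums.
Variables (R : nmodType) (f : nat -> R) (n : nat).

Lemma big_ord_pred1U a (P : pred nat) : (a < n)%N -> ~~ P a ->
  \sum_(i < n | (i == a :> nat) || P i) f i = f a + \sum_(i < n | P i) f i.
Proof.
move=> a_lt_n Pa; rewrite (bigID (fun i : 'I_n => i == a :> nat)) /=.
congr (_ + _).
  rewrite (eq_bigl (fun i : 'I_n => i == a :> nat)) ?big_ord1_eq ?a_lt_n //.
  by move=> i; rewrite andb_idl // => ->.
by apply: eq_bigl => i; case: eqP => [->|]; rewrite ?(negbTE Pa) ?andbT.
Qed.

Lemma big_ord_pred2 a b : (a < n)%N -> (b < n)%N -> a != b ->
  \sum_(i < n | (i == a :> nat) || (i == b :> nat)) f i = f a + f b.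
Proof.
by move=> a_lt_n b_lt_n ab; rewrite (big_ord_pred1U (P := pred1 b)) // big_ord1_eq b_lt_n.
Qed.

Lemma big_ord_range a b : (a + b <= n)%N ->
  \sum_(i < n | (a <= i < a + b)%N) f i = \sum_(i < b) f (a + i)%N.
Proof.
move=> ab_le_n; rewrite (eq_bigl (fun i : 'I_n => (i < a + b) && (a <= i))%N); last first.
  by move=> i; rewrite andbC.
rewrite -(big_geq_mkord _ _ (fun i => i < a + b)%N) -(big_nat_widen _ _ _ xpredT) //.
rewrite -{1}[a]add0n big_addn addKn big_mkord.
by apply: eq_bigr => i _; rewrite addnC.
Qed.

Lemma big_ord_pred1_range a lo b : (a < n)%N -> (lo + b <= n)%N -> ~~ (lo <= a < lo + b)%N ->
  \sum_(i < n | (i == a :> nat) || (lo <= i < lo + b)%N) f i = f a + \sum_(i < b) f (lo + i)%N.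
Proof.
move=> a_lt_n lob_le_n a_out.
by rewrite (big_ord_pred1U (P := fun i => lo <= i < lo + b)%N) // big_ord_range.
Qed.

End OrdinalSums.

Lemma leg_eigen_relation (R : comRingType) (x h a b : R) :
  a = x * b -> h + b = x * a -> (x ^+ 2 - 1) * a = x * h.
Proof. by move=> -> /(canRL (addrK b)) ->; ring. Qed.

Lemma hub_eigen_relation (R : comRingType) (x h h' : R) (n : nat) (a : nat -> R) :
  (forall i, (i < n)%N -> (x ^+ 2 - 1) * a i = x * h) ->
  h' + \sum_(i < n) a i = x * h ->
  (x ^+ 2 - 1) * (x * h - h') = n%:R * x * h.
Proof.
move=> leg hub; rewrite -hub addrAC subrr add0r mulr_sumr.
rewrite (eq_bigr (fun _ => x * h)) => [|i _]; last exact: leg.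
by rewrite sumr_const card_ord -mulrA mulr_natl.
Qed.

Section Eigenvector.
Variables (l m : nat) (x : algC) (f : nat -> algC).
Hypothesis eigen : forall j, (j < Tnum l m)%N ->
  \sum_(i < Tnum l m | Tedge l m i j) f i = x * f j.

Lemma eigen_nbr j (P : pred nat) : (forall k, Tedge l m k j = P k) ->
  (j < Tnum l m)%N -> \sum_(k < Tnum l m | P k) f k = x * f j.
Proof. by move=> eP j_lt; rewrite -eigen //; apply: eq_bigl => k; rewrite eP. Qed.

Lemma eigen_end1 i : (i < l)%N -> f (2 + i)%N = x * f (2 + l + i)%N.
Proof. by move=> il; rewrite -(eigen_nbr (Tedge_end1 m il)) ?big_ord1_eq ?ifT // /Tnum; lia. Qed.

Lemma eigen_end2 i : (i < m)%N -> f (2 + 2 * l + i)%N = x * f (2 + 2 * l + m + i)%N.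
Proof. by move=> im; rewrite -(eigen_nbr (Tedge_end2 l im)) ?big_ord1_eq ?ifT // /Tnum; lia. Qed.

Lemma eigen_mid1 i : (i < l)%N -> f 0%N + f (2 + l + i)%N = x * f (2 + i)%N.
Proof. by move=> il; rewrite -(eigen_nbr (Tedge_mid1 m il)) ?big_ord_pred2 // /Tnum; lia. Qed.

Lemma eigen_mid2 i : (i < m)%N -> f 1%N + f (2 + 2 * l + m + i)%N = x * f (2 + 2 * l + i)%N.
Proof. by move=> im; rewrite -(eigen_nbr (Tedge_mid2 l im)) ?big_ord_pred2 // /Tnum; lia. Qed.

Lemma eigen_hub1 : f 1%N + \sum_(i < l) f (2 + i)%N = x * f 0%N.
Proof. by rewrite -(eigen_nbr (Tedge_hub1 l m)) ?big_ord_pred1_range // /Tnum; lia. Qed.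

Lemma eigen_hub2 : f 0%N + \sum_(i < m) f (2 + 2 * l + i)%N = x * f 1%N.
Proof. by rewrite -(eigen_nbr (Tedge_hub2 l m)) ?big_ord_pred1_range // /Tnum; lia. Qed.

Lemma eigen_leg1 i : (i < l)%N -> (x ^+ 2 - 1) * f (2 + i)%N = x * f 0%N.
Proof. by move=> il; apply: leg_eigen_relation (eigen_end1 il) (eigen_mid1 il). Qed.

Lemma eigen_leg2 i : (i < m)%N -> (x ^+ 2 - 1) * f (2 + 2 * l + i)%N = x * f 1%N.
Proof. by move=> im; apply: leg_eigen_relation (eigen_end2 im) (eigen_mid2 im). Qed.

Lemma eigen_hub_relation1 : (x ^+ 2 - 1) * (x * f 0%N - f 1%N) = l%:R * x * f 0%N.
Proof. exact: hub_eigen_relation eigen_leg1 eigen_hub1. Qed.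

Lemma eigen_hub_relation2 : (x ^+ 2 - 1) * (x * f 1%N - f 0%N) = m%:R * x * f 1%N.
Proof. exact: hub_eigen_relation eigen_leg2 eigen_hub2. Qed.

Lemma eigen_vanish : x ^+ 2 != 1 -> f 0%N = 0 -> forall k, (k < Tnum l m)%N -> f k = 0.
Proof.
move=> x2_neq1 f0; have D_neq0 : x ^+ 2 - 1 != 0 by rewrite subr_eq0.
have leg_eq0 a b : (x ^+ 2 - 1) * a = x * b -> b = 0 -> a = 0.
  by move=> e b0; apply/eqP; move: e; rewrite b0 mulr0 => /eqP; rewrite mulf_eq0 (negbTE D_neq0).
have f1 : f 1%N = 0.
  have := eigen_hub_relation1; rewrite f0 !mulr0 sub0r => hub.
  by apply/eqP; rewrite -oppr_eq0; apply/eqP/(leg_eq0 _ 0); rewrite ?hub ?mulr0.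
have mid1 i : (i < l)%N -> f (2 + i)%N = 0 by move=> il; exact: leg_eq0 (eigen_leg1 il) f0.
have mid2 i : (i < m)%N -> f (2 + 2 * l + i)%N = 0 by move=> im; exact: leg_eq0 (eigen_leg2 im) f1.
move=> k; rewrite /Tnum => k_lt.
have [->|k_neq0] := eqVneq k 0%N; first exact: f0.
have [->|k_neq1] := eqVneq k 1%N; first exact: f1.
case: (ltnP k (2 + l)) => [k_lt1|k_ge1].
  have -> : k = (2 + (k - 2))%N by lia.
  by apply: mid1; lia.
case: (ltnP k (2 + 2 * l)) => [k_lt2|k_ge2].
  have -> : k = (2 + l + (k - 2 - l))%N by lia.
  have il : (k - 2 - l < l)%N by lia.
  by have := eigen_mid1 il; rewrite f0 mid1 // mulr0 add0r.
case: (ltnP k (2 + 2 * l + m)) => [k_lt3|k_ge3].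
  have -> : k = (2 + 2 * l + (k - 2 - 2 * l))%N by lia.
  by apply: mid2; lia.
have -> : k = (2 + 2 * l + m + (k - 2 - 2 * l - m))%N by lia.
have im : (k - 2 - 2 * l - m < m)%N by lia.
by have := eigen_mid2 im; rewrite f1 mid2 // mulr0 add0r.
Qed.

End Eigenvector.

(** * The cubic [p] with [q(x) = p(x^2)] *)

Local Notation pQtoC := (map_poly (ratr : rat -> algC)).

Definition cubic (c2 c1 c0 : rat) : {poly rat} := 'X^3 - c2%:P * 'X^2 + c1%:P * 'X - c0%:P.

Definition p_Tlm (l m : nat) : {poly rat} := cubic (l + m + 3)%:R (l * m + l + m + 3)%:R 1.

Lemma horner_cubic c2 c1 c0 z : (cubic c2 c1 c0).[z] = z ^+ 3 - c2 * z ^+ 2 + c1 * z - c0.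
Proof. by rewrite /cubic !hornerE. Qed.

Lemma horner_map_cubic c2 c1 c0 (z : algC) :
  (pQtoC (cubic c2 c1 c0)).[z] = z ^+ 3 - ratr c2 * z ^+ 2 + ratr c1 * z - ratr c0.
Proof.
by rewrite /cubic !(rmorphB, rmorphD, rmorphXn, rmorphM) /= map_polyX !map_polyC !hornerE; ring.
Qed.

Lemma hub_resultant (l m : nat) (x a b : algC) :
  (x ^+ 2 - 1) * (x * a - b) = l%:R * x * a -> (x ^+ 2 - 1) * (x * b - a) = m%:R * x * b ->
  (pQtoC (p_Tlm l m)).[x ^+ 2] * a = 0.
Proof.
move=> hub1 hub2; rewrite horner_map_cubic !ratr_nat rmorph1.
transitivity ((x ^+ 2 - 1) * ((x ^+ 2 - 1) * (x * b - a) - m%:R * x * b)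
  + ((x ^+ 2 - 1) * x - m%:R * x) * ((x ^+ 2 - 1) * (x * a - b) - l%:R * x * a)); first ring.
by rewrite hub1 hub2 !subrr !mulr0 addr0.
Qed.

Lemma eigenvalue_adjT_sqr l m x :
  eigenvalue (adjT l m) x -> x ^+ 2 != 1 -> root (pQtoC (p_Tlm l m)) (x ^+ 2).
Proof.
move=> /eigenvalueP[v vA v_neq0] x2_neq1.
pose f k := v 0 (inord k).
have eigen j : (j < Tnum l m)%N -> \sum_(i < Tnum l m | Tedge l m i j) f i = x * f j.
  move=> j_lt; have := congr1 (fun M : 'rV[algC]_(Tnum l m) => M 0 (inord j)) vA.
  rewrite !mxE => <-.
  rewrite big_mkcond; apply: eq_bigr => i _.
  by rewrite /f inord_val mxE inordK // mulr_natr mulrb.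
have f0_neq0 : f 0%N != 0.
  apply: contra v_neq0 => /eqP f0; apply/eqP/rowP => k; rewrite mxE.
  by have := eigen_vanish eigen x2_neq1 f0 (ltn_ord k); rewrite /f inord_val.
have := hub_resultant (eigen_hub_relation1 eigen) (eigen_hub_relation2 eigen).
by move/eqP; rewrite mulf_eq0 (negbTE f0_neq0) orbF.
Qed.

Lemma size_cubic c2 c1 c0 : size (cubic c2 c1 c0) = 4%N.
Proof.
rewrite /cubic -!addrA size_polyDl ?size_polyXn // ltnS.
apply/leq_sizeP => j; case: j => [|[|[|j]]] // _.
by rewrite !(coefD, coefN, coefB, coefCM, coefXn, coefX, coefC) !mulr0 !subr0 oppr0.
Qed.

Lemma monic_cubic c2 c1 c0 : cubic c2 c1 c0 \is monic.
Proof.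
rewrite monicE lead_coefE size_cubic.
by rewrite !(coefD, coefN, coefB, coefCM, coefXn, coefX, coefC) !mulr0 !subr0.
Qed.

Lemma q_Tlm_comp l m : q_Tlm l m = p_Tlm l m \Po 'X^2.
Proof.
rewrite /q_Tlm /p_Tlm /cubic.
rewrite !(comp_polyB, comp_polyD, comp_Xn_poly, comp_polyM, comp_polyC, comp_polyX).
by rewrite polyC1 -!exprM.
Qed.

Lemma rat_root_int (P : {poly rat}) (t : rat) :
  P \is monic -> (forall i, P`_i \in Num.int) -> root P t -> t \in Num.int.
Proof.
move=> P_monic P_int Pt; have : ratr t \in Aint.
  apply: (@root_monic_Aint (pQtoC P)); rewrite ?fmorph_root ?map_monic //.
  by apply/polyOverP => i; rewrite coef_map /=; have /intrP[z ->] := P_int i; rewrite rmorph_int.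
move/(Cint_rat_Aint (Crat_rat t))/intrP => [z tz]; apply/intrP; exists z.
by apply: (fmorph_inj (ratr : {rmorphism rat -> algC})); rewrite rmorph_int.
Qed.

Lemma p_Tlm_no_rat_root l m : (0 < l)%N -> (0 < m)%N -> forall t, ~~ root (p_Tlm l m) t.
Proof.
move=> l_gt0 m_gt0 t; apply/negP => pt.
have p_int i : (p_Tlm l m)`_i \in Num.int.
  rewrite /p_Tlm /cubic polyC1 !(coefB, coefD, coefCM, coefXn, coefX, coef1).
  by rewrite !(rpredB, rpredD, rpredM, rpred_nat).
have /intrP[k tk] := rat_root_int (monic_cubic _ _ _) p_int pt.
have : (k ^+ 3 - (l + m + 3)%:R * k ^+ 2 + (l * m + l + m + 3)%:R * k - 1 : int)%:~R = 0 :> rat.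
  move: pt; rewrite /root horner_cubic tk => /eqP <-.
  by rewrite !(rmorphB, rmorphD, rmorphM, rmorphXn, rmorph1, rmorph_nat).
move/eqP; rewrite intr_eq0 => /eqP pk.
have : (k ^+ 2 - (l + m + 3)%:R * k + (l * m + l + m + 3)%:R) * k = 1.
  by apply/eqP; rewrite -subr_eq0 -pk; apply/eqP; ring.
move/intUnitRing.unitzPl; rewrite qualifE => /orP[]/eqP k1.
all: by move: pk; rewrite k1 !natrD natrM; lia.
Qed.

Lemma p_Tlm_irreducible l m : (0 < l)%N -> (0 < m)%N -> irreducible_poly (p_Tlm l m).
Proof.
by move=> l_gt0 m_gt0; apply: cubic_irreducible; [rewrite size_cubic | exact: p_Tlm_no_rat_root].
Qed.

Lemma irreducible_dvdp_of_root (P K : {poly rat}) (y : algC) :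
  irreducible_poly P -> root (pQtoC P) y -> root (pQtoC K) y -> P %| K.
Proof.
move=> [_ irrP] Py Ky; have [M [_ M_monic] minM] := minCpolyP y.
have M_P : M %| P by rewrite -minM.
have M_gt1 : size M != 1%N.
  have : (1 < size (pQtoC M))%N.
    by apply: (@root_size_gt1 _ y); rewrite ?map_poly_eq0 ?monic_neq0 ?minM.
  by rewrite size_map_poly => /gtn_eqF ->.
by rewrite -(eqp_dvdl _ (irrP M M_gt1 M_P)) -minM.
Qed.

Lemma irreducible_separable (F : numFieldType) (P : {poly F}) :
  irreducible_poly P -> separable_poly P.
Proof.
move=> irrP; rewrite unlock irreducible_poly_coprime //; have [P_gt1 _] := irrP.
have P_neq0 : P != 0 by rewrite -size_poly_gt0 ltnW.
have dP_neq0 : P^`() != 0.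
  have [n Pn] : exists n, size P = n.+2 by exists (size P - 2)%N; rewrite -addn2 subnK.
  apply/eqP => /(congr1 (coefp n)) /eqP; rewrite /= coef_deriv coef0 mulrn_eq0 /=.
  by rewrite -[n.+1]/(n.+2.-1) -Pn -/(lead_coef P) lead_coef_eq0 (negbTE P_neq0).
by apply/negP => /(dvdp_leq dP_neq0); rewrite leqNgt lt_size_deriv.
Qed.

Lemma cubic_factor c2 c1 c0 : irreducible_poly (cubic c2 c1 c0) ->
  exists y1 y2 y3 : algC, uniq [:: y1; y2; y3] /\
    forall z, (pQtoC (cubic c2 c1 c0)).[z] = (z - y1) * (z - y2) * (z - y3).
Proof.
move=> irr; have [r Er] := closed_field_poly_normal (pQtoC (cubic c2 c1 c0)).
rewrite (monicP (_ : _ \is monic)) ?map_monic ?monic_cubic // scale1r in Er.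
have r_uniq : uniq r.
  by rewrite -separable_prod_XsubC -Er separable_map irreducible_separable.
have : size r = 3%N by have := size_prod_XsubC r id; rewrite -Er size_map_poly size_cubic; case.
case: r Er r_uniq => [|y1 [|y2 [|y3 [|]]]] //= Er r_uniq _; exists y1, y2, y3; split=> // z.
by rewrite Er !big_cons big_nil mulr1 !hornerE.
Qed.

Lemma cubic_vieta (F : numFieldType) (c2 c1 c0 y1 y2 y3 : F) :
  (forall z, z ^+ 3 - c2 * z ^+ 2 + c1 * z - c0 = (z - y1) * (z - y2) * (z - y3)) ->
  [/\ y1 + y2 + y3 = c2, y1 * y2 + y1 * y3 + y2 * y3 = c1 & y1 * y2 * y3 = c0].
Proof.
move=> E; have E0 := E 0; have E1 := E 1; have En1 := E (-1).
have two_neq0 : 2 != 0 :> F by rewrite pnatr_eq0.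
have e0 : y1 * y2 * y3 = c0.
  apply: oppr_inj; transitivity ((0 - y1) * (0 - y2) * (0 - y3)); first ring.
  by rewrite -E0; ring.
have e1 : y1 * y2 + y1 * y3 + y2 * y3 = c1.
  apply: (mulIf two_neq0).
  transitivity ((1 - y1) * (1 - y2) * (1 - y3) - (-1 - y1) * (-1 - y2) * (-1 - y3) - 2); first ring.
  by rewrite -E1 -En1; ring.
split=> //; apply: (mulIf two_neq0).
transitivity (- ((1 - y1) * (1 - y2) * (1 - y3)) - (-1 - y1) * (-1 - y2) * (-1 - y3)
  - 2 * (y1 * y2 * y3)); first ring.
by rewrite -E1 -En1 e0; ring.
Qed.

Lemma map_cubic_vieta c2 c1 c0 (y1 y2 y3 : algC) :
  (forall z, (pQtoC (cubic c2 c1 c0)).[z] = (z - y1) * (z - y2) * (z - y3)) ->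
  [/\ y1 + y2 + y3 = ratr c2, y1 * y2 + y1 * y3 + y2 * y3 = ratr c1 & y1 * y2 * y3 = ratr c0].
Proof. by move=> E; apply: cubic_vieta => z; rewrite -horner_map_cubic. Qed.

(** * Square roots of the roots of [p] *)

Lemma horner_map_modp (P W : {poly rat}) (y : algC) :
  root (pQtoC P) y -> (pQtoC (W %% P)).[y] = (pQtoC W).[y].
Proof.
move=> /eqP Py; rewrite [in RHS](divp_eq W P) rmorphD rmorphM /=.
by rewrite hornerD hornerM Py mulr0 add0r.
Qed.

Lemma horner_map_comp_sqr (P : {poly rat}) (r : algC) :
  (pQtoC (P \Po 'X^2)).[r] = (pQtoC P).[r ^+ 2].
Proof. by rewrite map_comp_poly horner_comp rmorphXn /= map_polyX hornerXn. Qed.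

(* Splitting [h] into even and odd parts, [h(r) = E(r^2) + r O(r^2)]; if [O(r^2) = 0] then
   [E(r^2) = 0] too and [P] divides both, so [P(X^2)] would divide [h]. Otherwise [O] is
   invertible modulo [P] and [r = -E(r^2)/O(r^2)] is a polynomial in [r^2]. *)
Lemma sqrt_in_root_field (P h : {poly rat}) (r : algC) :
  irreducible_poly P -> root (pQtoC P) (r ^+ 2) -> root (pQtoC h) r ->
  ~~ (P \Po 'X^2 %| h) -> exists W : {poly rat}, (pQtoC W).[r ^+ 2] = r.
Proof.
move=> irrP Py hr P2_h; set y := r ^+ 2 in Py *.
set E := even_poly h; set O := odd_poly h.
have hEO : (pQtoC E).[y] + (pQtoC O).[y] * r = 0.
  move: hr; rewrite /root -{1}(poly_even_odd h) rmorphD rmorphM /= hornerD hornerM.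
  by rewrite !horner_map_comp_sqr map_polyX hornerX => /eqP.
have Oy_neq0 : (pQtoC O).[y] != 0.
  apply: contra P2_h => /eqP Oy; move: hEO; rewrite Oy mul0r addr0 => Ey.
  rewrite -(poly_even_odd h) dvdp_add ?dvdp_mulr // dvdp_comp_poly //.
    by apply: (irreducible_dvdp_of_root irrP Py); rewrite /root Ey.
  by apply: (irreducible_dvdp_of_root irrP Py); rewrite /root Oy.
have PO : coprimep P O.
  rewrite irreducible_poly_coprime //; apply: contra Oy_neq0 => PO.
  by apply: (root_dvdp _ Py); rewrite dvdp_map.
have [[u v] /= uv] := Bezout_eq1_coprimepP _ _ PO.
have vO : (pQtoC v).[y] * (pQtoC O).[y] = 1.
  have := congr1 (fun Q => (pQtoC Q).[y]) uv; rewrite /= rmorphD !rmorphM rmorph1 /=.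
  by rewrite hornerD !hornerM (eqP Py) mulr0 add0r hornerC.
exists (- (E * v)); rewrite rmorphN rmorphM /= hornerN hornerM.
have -> : (pQtoC E).[y] = - ((pQtoC O).[y] * r) by apply/eqP; rewrite -addr_eq0 hEO.
by rewrite mulNr opprK mulrAC [_ * (pQtoC v).[y]]mulrC vO mul1r.
Qed.

Lemma sqrt_roots_of_reducible (P : {poly rat}) :
  irreducible_poly P -> ~ irreducible_poly (P \Po 'X^2) ->
  exists2 W : {poly rat}, (size W < size P)%N &
    forall y, root (pQtoC P) y -> (pQtoC W).[y] ^+ 2 = y.
Proof.
move=> irrP redP2; have [P_gt1 _] := irrP.
have P_neq0 : P != 0 by rewrite -size_poly_gt0 ltnW.
have [h [h_neq1 h_P2 P2_h]] : exists h : {poly rat},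
    [/\ size h != 1%N, h %| P \Po 'X^2 & ~~ (P \Po 'X^2 %| h)].
  apply: NNPP => no_factor; apply: redP2; split=> [|h h_neq1 h_P2].
    move: P_gt1 (size_comp_poly P 'X^2); rewrite size_polyXn /= muln2.
    by case: (size (P \Po 'X^2)) => [|[|n]] //; case: (size P) => [|[|k]].
  rewrite /eqp h_P2 /=; case P2_h: (P \Po 'X^2 %| h) => //.
  by case: no_factor; exists h; rewrite P2_h.
have [r hr] : exists r, root (pQtoC h) r by apply/closed_rootP; rewrite size_map_poly.
have Pr : root (pQtoC P) (r ^+ 2).
  by rewrite /root -horner_map_comp_sqr; apply: root_dvdp hr; rewrite dvdp_map.
have [W Wr] := sqrt_in_root_field irrP Pr hr P2_h.
exists (W %% P); first by rewrite ltn_modp.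
move=> y Py; rewrite horner_map_modp //; apply/eqP; rewrite -subr_eq0.
have P_W2X : P %| W ^+ 2 - 'X.
  apply: (irreducible_dvdp_of_root irrP Pr).
  by rewrite /root rmorphB rmorphXn /= map_polyX !hornerE Wr subrr.
have /eqP := root_dvdp (etrans (dvdp_map _ _ _) P_W2X) Py.
by rewrite rmorphB rmorphXn /= map_polyX !hornerE => ->.
Qed.

Lemma sum_horner_quadratic_Crat (W : {poly rat}) (y1 y2 y3 : algC) : (size W <= 3)%N ->
  y1 + y2 + y3 \in Crat -> y1 * y2 + y1 * y3 + y2 * y3 \in Crat ->
  (pQtoC W).[y1] + (pQtoC W).[y2] + (pQtoC W).[y3] \in Crat.
Proof.
move=> W_le3 e1 e2; rewrite !(@horner_coef_wide _ 3) ?size_map_poly //.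
rewrite !big_ord_recl !big_ord0 /= /bump /= !addn0 !add1n !coef_map /=.
apply: (eq_ind (ratr W`_0 * 3%:R + ratr W`_1 * (y1 + y2 + y3)
  + ratr W`_2 * ((y1 + y2 + y3) ^+ 2 - 2%:R * (y1 * y2 + y1 * y3 + y2 * y3)))
  (fun t => t \in Crat)); last by ring.
apply: rpredD; [apply: rpredD|]; apply: rpredM; rewrite ?Crat_rat //; first exact: rpred_nat.
by apply: rpredB; [exact: rpredX | apply: rpredM => //; exact: rpred_nat].
Qed.

Lemma cubic_of_sqrt_roots (c2 c1 e2 : rat) (y1 y2 y3 r1 r2 r3 : algC) :
  (forall z, (pQtoC (cubic c2 c1 1)).[z] = (z - y1) * (z - y2) * (z - y3)) ->
  r1 ^+ 2 = y1 -> r2 ^+ 2 = y2 -> r3 ^+ 2 = y3 -> r1 + r2 + r3 = ratr e2 ->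
  exists e1 e0, forall z, (pQtoC (cubic e2 e1 e0)).[z] = (z - r1) * (z - r2) * (z - r3).
Proof.
move=> p_E r1y r2y r3y r_sum.
have [y_sum _ y_prod] := map_cubic_vieta p_E.
have [e0 e0E] : exists e0, ratr e0 = r1 * r2 * r3.
  have : (r1 * r2 * r3) ^+ 2 = 1 by rewrite !exprMn r1y r2y r3y y_prod rmorph1.
  move/eqP; rewrite sqrf_eq1 => /orP[] /eqP ->.
    by exists 1; rewrite rmorph1.
  by exists (-1); rewrite rmorphN1.
exists ((e2 ^+ 2 - c2) / 2%:R), e0 => z.
rewrite horner_map_cubic e0E fmorph_div rmorphB rmorphXn rmorph_nat /= -r_sum -y_sum -r1y -r2y -r3y.
by field.
Qed.

Lemma sqr_sum_sqr (R : comRingType) (r1 r2 r3 : R) : r1 + r2 + r3 = 0 ->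
  (r1 ^+ 2 + r2 ^+ 2 + r3 ^+ 2) ^+ 2 =
    4%:R * (r1 ^+ 2 * r2 ^+ 2 + r1 ^+ 2 * r3 ^+ 2 + r2 ^+ 2 * r3 ^+ 2).
Proof. by move=> /(canRL (addKr _)) ->; ring. Qed.

Lemma sqrt_roots_sum_neq0 (c2 c1 : rat) (y1 y2 y3 r1 r2 r3 : algC) : c2 ^+ 2 != 4%:R * c1 ->
  (forall z, (pQtoC (cubic c2 c1 1)).[z] = (z - y1) * (z - y2) * (z - y3)) ->
  r1 ^+ 2 = y1 -> r2 ^+ 2 = y2 -> r3 ^+ 2 = y3 -> r1 + r2 + r3 != 0.
Proof.
move=> c21 p_E r1y r2y r3y; apply: contra c21 => /eqP /sqr_sum_sqr.
have [y_sum y_sum2 _] := map_cubic_vieta p_E.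
by rewrite r1y r2y r3y y_sum y_sum2 -rmorphXn -(rmorph_nat ratr) -rmorphM => /fmorph_inj ->.
Qed.

Lemma no_rat_root_sqrt (P g : {poly rat}) : (forall t, ~~ root P t) ->
  (forall x, root (pQtoC g) x -> root (pQtoC P) (x ^+ 2)) -> forall t, ~~ root g t.
Proof.
move=> P_no_root gP t; apply/negP => gt.
by have := gP (ratr t); rewrite -rmorphXn !fmorph_root (negbTE (P_no_root _)) => /(_ gt).
Qed.

(** * Linear independence over [Q] *)

Lemma irreducible_affine_root (P : {poly rat}) (r : algC) (a b : rat) :
  irreducible_poly P -> a != 0 -> root (pQtoC P) r -> root (pQtoC P) (ratr a * r + ratr b) ->
  exists k : rat, forall z, P.[a * z + b] = k * P.[z].
Proof.
move=> irrP a_neq0 Pr Par; set phi := a%:P * 'X + b%:P.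
have size_phi : size phi = 2%N.
  by rewrite size_MXaddC polyC_eq0 (negbTE a_neq0) size_polyC a_neq0.
have P_Pphi : P %| P \Po phi.
  apply: (irreducible_dvdp_of_root irrP Pr).
  by rewrite /root map_comp_poly horner_comp /phi rmorphD rmorphM /= !map_polyC map_polyX !hornerE.
have /eqpP[[c1 c2] /andP[c1_neq0 c2_neq0] /= c12] : P %= P \Po phi.
  by rewrite -dvdp_size_eqp // size_comp_poly2.
exists (c1 / c2) => z; have := congr1 (horner^~ z) c12.
rewrite /= !hornerZ horner_comp /phi !hornerE => c12z.
by apply: (mulfI c2_neq0); rewrite -c12z mulrA [c2 * _]mulrC divfK.
Qed.

(* The third and second finite differences of [z |-> g(a z + b) - k g(z)] on [-1, 0, 1, 2]
   pick out its coefficients of [z^3] and [z^2]. *)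
Lemma cubic_affine_coef e2 e1 e0 (a b k : rat) : a != 0 ->
  (forall z, (cubic e2 e1 e0).[a * z + b] = k * (cubic e2 e1 e0).[z]) ->
  k = a ^+ 3 /\ 3%:R * b = e2 - a * e2.
Proof.
move=> a_neq0 inv.
pose D z := (cubic e2 e1 e0).[a * z + b] - k * (cubic e2 e1 e0).[z].
have D0 z : D z = 0 by rewrite /D inv subrr.
have k_a3 : k = a ^+ 3.
  have : (a ^+ 3 - k) * 6%:R = D 2%:R - 3%:R * D 1 + 3%:R * D 0 - D (-1).
    by rewrite /D !horner_cubic; ring.
  by rewrite !D0; move/eqP; rewrite mulf_eq0 pnatr_eq0 orbF subr_eq0 => /eqP ->; ring.
split=> //; have : a ^+ 2 * (3%:R * b - e2 + a * e2) * 2%:R = D 1 + D (-1) - 2%:R * D 0.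
  by rewrite /D !horner_cubic k_a3; ring.
rewrite !D0 => /eqP; rewrite mulf_eq0 pnatr_eq0 orbF mulf_eq0 expf_eq0 /= (negbTE a_neq0).
by move=> /eqP b_eq; apply/eqP; rewrite -subr_eq0 -b_eq; apply/eqP; ring.
Qed.

Lemma cubic_affine_invariant e2 e1 e0 (a b k : rat) :
  (forall t, ~~ root (cubic e2 e1 e0) t) -> a != 0 ->
  (forall z, (cubic e2 e1 e0).[a * z + b] = k * (cubic e2 e1 e0).[z]) -> a = 1 /\ b = 0.
Proof.
move=> no_root a_neq0 inv; have [k_a3 b_fix] := cubic_affine_coef a_neq0 inv.
have three_neq0 : 3%:R != 0 :> rat by rewrite pnatr_eq0.
have c_fix : a * (e2 / 3%:R) + b = e2 / 3%:R.
  by apply: (mulIf three_neq0); rewrite mulrDl -mulrA divfK // [b * _]mulrC b_fix; ring.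
have a3 : a ^+ 3 = 1.
  have : (a ^+ 3 - 1) * (cubic e2 e1 e0).[e2 / 3%:R] = 0.
    by rewrite mulrBl mul1r -k_a3 -inv c_fix subrr.
  have gc_neq0 : (cubic e2 e1 e0).[e2 / 3%:R] != 0 := no_root _.
  by move/eqP; rewrite mulf_eq0 (negbTE gc_neq0) orbF subr_eq0 => /eqP.
have a1 : a = 1.
  have : (a - 1) * (a ^+ 2 + a + 1) = 0.
    by transitivity (a ^+ 3 - 1); [ring | rewrite a3 subrr].
  have a2_pos : 0 < a ^+ 2 + a + 1 by nra.
  by move/eqP; rewrite mulf_eq0 (gt_eqF a2_pos) orbF subr_eq0 => /eqP.
split=> //; apply: (mulIf three_neq0).
by rewrite mul0r [b * _]mulrC b_fix a1 mul1r subrr.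
Qed.

Lemma cubic_roots_Qlin_indep e2 e1 e0 (r1 r2 : algC) (c0 c1 c2 : rat) :
  (forall t, ~~ root (cubic e2 e1 e0) t) ->
  root (pQtoC (cubic e2 e1 e0)) r1 -> root (pQtoC (cubic e2 e1 e0)) r2 -> r1 != r2 ->
  ratr c0 + ratr c1 * r1 + ratr c2 * r2 = 0 -> [/\ c0 = 0, c1 = 0 & c2 = 0].
Proof.
move=> no_root gr1 gr2 r12 rel.
have irr_g : irreducible_poly (cubic e2 e1 e0) by apply: cubic_irreducible; rewrite ?size_cubic.
have [c2_0|c2_neq0] := eqVneq c2 0.
  move: rel; rewrite c2_0 rmorph0 mul0r addr0 => rel.
  have [c1_0|c1_neq0] := eqVneq c1 0.
    by move: rel; rewrite c1_0 rmorph0 mul0r addr0 => /eqP; rewrite fmorph_eq0 => /eqP.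
  have c1r1 : ratr c1 * r1 = - ratr c0 by apply/eqP; rewrite -addr_eq0 addrC rel.
  have r1E : r1 = ratr (- c0 / c1) by rewrite fmorph_div rmorphN -c1r1 mulrC mulKf // fmorph_eq0.
  by move: gr1; rewrite r1E fmorph_root (negbTE (no_root _)).
pose a := - c1 / c2; pose b := - c0 / c2.
have r2E : r2 = ratr a * r1 + ratr b.
  have c2C : ratr c2 != 0 :> algC by rewrite fmorph_eq0.
  have c2r2 : ratr c2 * r2 = - (ratr c0 + ratr c1 * r1) by apply/eqP; rewrite -addr_eq0 addrC rel.
  by apply: (mulfI c2C); rewrite /a /b !fmorph_div !rmorphN c2r2; field.
have a_neq0 : a != 0.
  by apply: contraTneq gr2 => a0; rewrite r2E a0 rmorph0 mul0r add0r fmorph_root no_root.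
have gr2' : root (pQtoC (cubic e2 e1 e0)) (ratr a * r1 + ratr b) by rewrite -r2E.
have [k inv] := irreducible_affine_root irr_g a_neq0 gr1 gr2'.
have [a1 b0] := cubic_affine_invariant no_root a_neq0 inv.
by move: r12; rewrite r2E a1 b0 rmorph1 rmorph0 mul1r addr0 eqxx.
Qed.

Definition Qlin_indep_but_one (r : seq algC) : Prop :=
  forall (i0 : nat) (d : nat -> rat), (i0 < size r)%N -> d i0 = 0 ->
    \sum_(i < size r) ratr (d i) * r`_i = 0 -> forall i, (i < size r)%N -> d i = 0.

Lemma cubic_roots_indep_but_one e2 e1 e0 (r1 r2 r3 : algC) :
  (forall t, ~~ root (cubic e2 e1 e0) t) ->
  (forall z, (pQtoC (cubic e2 e1 e0)).[z] = (z - r1) * (z - r2) * (z - r3)) ->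
  r1 != r2 -> e2 != 0 -> Qlin_indep_but_one [:: 1; r1; r2; r3].
Proof.
move=> no_root g_E r12 e2_neq0 i0 d i0_lt di0 rel.
have [r_sum _ _] := map_cubic_vieta g_E.
have gr1 : root (pQtoC (cubic e2 e1 e0)) r1 by rewrite /root g_E subrr !mul0r.
have gr2 : root (pQtoC (cubic e2 e1 e0)) r2 by rewrite /root g_E subrr mulr0 mul0r.
rewrite /= !big_ord_recl big_ord0 /= /bump /= !add1n addr0 mulr1 in rel.
have rel' : ratr (d 0%N + d 3%N * e2) + ratr (d 1%N - d 3%N) * r1 + ratr (d 2%N - d 3%N) * r2 = 0.
  rewrite -rel (_ : r3 = ratr e2 - r1 - r2); last by rewrite -r_sum; ring.
  by rewrite !(rmorphD, rmorphB, rmorphM); ring.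
have [d03 d13 d23] := cubic_roots_Qlin_indep no_root gr1 gr2 r12 rel'.
have d1E : d 1%N = d 3%N by apply/eqP; rewrite -subr_eq0 d13.
have d2E : d 2%N = d 3%N by apply/eqP; rewrite -subr_eq0 d23.
have d3_0 : d 3%N = 0.
  case: i0 i0_lt di0 => [|[|[|[|]]]] //= _ di0 //.
  - by move: d03; rewrite di0 add0r => /eqP; rewrite mulf_eq0 (negbTE e2_neq0) orbF => /eqP.
  - by rewrite -d1E.
  - by rewrite -d2E.
case=> [|[|[|[|]]]] // _; rewrite ?d1E ?d2E //.
by move: d03; rewrite d3_0 mul0r addr0.
Qed.

(* Each element of [P] is [+- r_i] for a single [i], as [P] is positive, so a relation among
   elements of [P] regroups into one among the [r_i] whose [i0]-th coefficient is zero. *)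
Lemma Qlin_indep_signed (r : seq algC) (i0 : nat) (P : pred algC) :
  Qlin_indep_but_one r -> (i0 < size r)%N -> (forall x, P x -> 0 < x) ->
  (forall x, P x -> exists2 i, (i < size r)%N & (i != i0) && (x ^+ 2 == r`_i ^+ 2)) ->
  Qlin_indep P.
Proof.
move=> indep i0_lt P_pos P_cls s c s_uniq sP rel.
pose k x : nat := oapp val i0 [pick i : 'I_(size r) | (val i != i0) && (x ^+ 2 == r`_i ^+ 2)].
have kP x : P x -> [/\ k x < size r, k x != i0 & x ^+ 2 = r`_(k x) ^+ 2]%N.
  move=> Px; rewrite /k; case: pickP => [i /andP[i_neq /eqP x_sq] | none] /=; first by split.
  by have [i i_lt cls_i] := P_cls x Px; have := none (Ordinal i_lt); rewrite /= cls_i.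
pose eps x : rat := if x == r`_(k x) then 1 else -1.
have x_eps x : P x -> x = ratr (eps x) * r`_(k x).
  move=> Px; have [_ _ /eqP x_sq] := kP x Px; rewrite /eps.
  case: ifP => [/eqP <-|x_neq]; first by rewrite rmorph1 mul1r.
  by move: x_sq; rewrite eqf_sqr x_neq => /eqP {1}->; rewrite rmorphN1 mulN1r.
pose d i := \sum_(x <- s | k x == i) c x * eps x.
have regroup : \sum_(i < size r) ratr (d i) * r`_i = \sum_(x <- s) ratr (c x) * x.
  transitivity (\sum_(x <- s) \sum_(i < size r | i == k x :> nat) ratr (c x * eps x) * r`_i).
    rewrite [RHS](exchange_big_dep xpredT) //=; apply: eq_bigr => i _.
    by rewrite /d rmorph_sum mulr_suml; apply: eq_bigl => x; rewrite eq_sym.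
  rewrite big_seq [RHS]big_seq; apply: eq_bigr => x xs; have Px := allP sP x xs.
  have [kx_lt _ _] := kP x Px.
  by rewrite (big_ord1_eq _ (fun j => ratr (c x * eps x) * r`_j)) kx_lt rmorphM -mulrA -x_eps.
have d_i0 : d i0 = 0.
  rewrite /d big_seq_cond big1 // => x /andP[xs /eqP kx].
  by have [_] := kP x (allP sP x xs); rewrite kx eqxx.
have d_eq0 := indep i0 d i0_lt d_i0 (etrans regroup rel).
apply/allP => x xs; have Px := allP sP x xs; have [kx_lt _ x_sq] := kP x Px.
have dk : d (k x) = c x * eps x.
  rewrite /d big_seq_cond (eq_bigl (pred1 x)) => [|y]; last first.
    apply/andP/eqP => [[ys /eqP kyx] | ->]; last by rewrite xs.
    have [_ _ y_sq] := kP y (allP sP y ys); apply/eqP.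
    by rewrite -(eqrXn2 (_ : 0 < 2)%N) ?ltW ?P_pos ?(allP sP) // y_sq kyx x_sq.
  by rewrite -big_filter filter_pred1_uniq // big_seq1.
move: (d_eq0 _ kx_lt); rewrite dk => /eqP; rewrite mulf_eq0 /eps.
by case: ifP => _; rewrite ?oppr_eq0 oner_eq0 orbF.
Qed.

Lemma p_Tlm_sqrt_roots l m : (0 < l)%N -> (0 < m)%N -> ~ irreducible_poly (q_Tlm l m) ->
  exists r1 r2 r3 : algC,
    (forall y, root (pQtoC (p_Tlm l m)) y -> [\/ y = r1 ^+ 2, y = r2 ^+ 2 | y = r3 ^+ 2]) /\
    Qlin_indep_but_one [:: 1; r1; r2; r3].
Proof.
move=> l_gt0 m_gt0 red_q; have irr_p := p_Tlm_irreducible l_gt0 m_gt0.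
have red_p2 : ~ irreducible_poly (p_Tlm l m \Po 'X^2) by rewrite -q_Tlm_comp.
have [W W_lt W_sqrt] := sqrt_roots_of_reducible irr_p red_p2.
have [y1 [y2 [y3 [y_uniq p_E]]]] := cubic_factor irr_p.
have [y_sum y_sum2 _] := map_cubic_vieta p_E.
have py y : root (pQtoC (p_Tlm l m)) y = [|| y == y1, y == y2 | y == y3].
  by rewrite /root p_E !mulf_eq0 !subr_eq0 orbA.
have r_sqr y : [|| y == y1, y == y2 | y == y3] -> (pQtoC W).[y] ^+ 2 = y.
  by move=> y_in; apply: W_sqrt; rewrite py.
set r1 := (pQtoC W).[y1]; set r2 := (pQtoC W).[y2]; set r3 := (pQtoC W).[y3].
have [e2 r_sum] : exists e2, r1 + r2 + r3 = ratr e2.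
  apply/CratP; rewrite sum_horner_quadratic_Crat ?y_sum ?y_sum2 ?Crat_rat //.
  by rewrite -ltnS size_cubic in W_lt.
have r1y : r1 ^+ 2 = y1 by apply: r_sqr; rewrite eqxx.
have r2y : r2 ^+ 2 = y2 by apply: r_sqr; rewrite eqxx orbT.
have r3y : r3 ^+ 2 = y3 by apply: r_sqr; rewrite eqxx !orbT.
have [e1 [e0 g_E]] := cubic_of_sqrt_roots p_E r1y r2y r3y r_sum.
exists r1, r2, r3; split=> [y /[!py] /or3P[]/eqP->|]; [exact: Or31 | exact: Or32 | exact: Or33|].
apply: (cubic_roots_indep_but_one _ g_E).
- apply: (no_rat_root_sqrt (p_Tlm_no_rat_root l_gt0 m_gt0)) => x /eqP.
  rewrite g_E => /eqP; rewrite !mulf_eq0 !subr_eq0 -orbA.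
  by case/or3P=> /eqP->; rewrite ?r1y ?r2y ?r3y py eqxx ?orbT.
- move: y_uniq; rewrite /= inE negb_or -andbA => /andP[y12 _].
  by apply: contraNneq y12 => r12; rewrite -r1y -r2y r12.
- have c21 : ((l + m + 3)%:R ^+ 2 != 4%:R * (l * m + l + m + 3)%:R :> rat).
    rewrite -natrX -natrM eqr_nat; apply/eqP; have := sqr_ge0 (l%:Z - m%:Z); nia.
  apply: contraNneq (sqrt_roots_sum_neq0 c21 p_E r1y r2y r3y) => e2_0.
  by rewrite r_sum e2_0 rmorph0.
Qed.

Theorem theorem2p2 (l m : nat) :
  (0 < l)%N -> (0 < m)%N ->
  ~ irreducible_poly (q_Tlm l m) ->
  forall mu : algC, 0 < mu -> eigenvalue (adjT l m) mu ->
    Qlin_indep [pred x : algC | [&& 0 < x, eigenvalue (adjT l m) x & x != mu]].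
Proof.
move=> l_gt0 m_gt0 red_q mu mu_gt0 eig_mu.
have [r1 [r2 [r3 [p_roots indep]]]] := p_Tlm_sqrt_roots l_gt0 m_gt0 red_q.
have sqr_class x : 0 < x -> eigenvalue (adjT l m) x ->
    exists2 i, (i < 4)%N & x ^+ 2 = [:: 1; r1; r2; r3]`_i ^+ 2.
  move=> x_gt0 eig_x; have [x2_1|x2_neq1] := eqVneq (x ^+ 2) 1.
    by exists 0%N; rewrite ?expr1n.
  have := p_roots _ (eigenvalue_adjT_sqr eig_x x2_neq1).
  by case=> ->; [exists 1%N | exists 2%N | exists 3%N].
have [i0 i0_lt mu_sq] := sqr_class mu mu_gt0 eig_mu.
apply: (Qlin_indep_signed indep i0_lt) => [x /and3P[] // | x /and3P[x_gt0 eig_x x_neq_mu]].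
have [i i_lt x_sq] := sqr_class x x_gt0 eig_x; exists i; rewrite // x_sq eqxx andbT.
apply: contra_neq x_neq_mu => i_i0; apply/eqP.
by rewrite -(eqrXn2 (_ : 0 < 2)%N) ?ltW // x_sq i_i0 -mu_sq.
Qed.
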